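(* Let $w\in\Sigma_{0,1,n}$. If there exists some planar expression for $w$, then the reduced expression of $w$ is planar, i.e. $w$ is a planar word.
   Context: $\Sigma_{0,1,n}$ is the free group on $t_1,\dots,t_n$; write $\overline t_k=t_k^{-1}$. Let $A$ be the set of $2n+2$ formal symbols $\overline z_1,t_1,\overline t_1,\dots,t_n,\overline t_n,z_1$, totally ordered by $\overline z_1<t_1<\overline t_1<t_2<\overline t_2<\dots<t_n<\overline t_n<z_1$. An expression for $w$ is a finite sequence $(a_1,\dots,a_m)$ of elements of $\{t_1^{\pm1},\dots,t_n^{\pm1}\}$ with $a_1\cdots a_m=w$, not necessarily reduced. Its Whitehead expansion is the $(2m+2)$-tuple $(c_1,\dots,c_{2m+2})=(\overline z_1,a_1,\overline a_1,a_2,\overline a_2,\dots,a_m,\overline a_m,z_1)$ of elements of $A$. Two $2$-element sets $\{a,b\},\{c,d\}$ of integers are nested if $a,b,c,d$ are distinct and either both or neither of $c,d$ lie strictly between $a$ and $b$. A family of such sets is nested if every two distinct members are nested. A $2M$-tuple $(c_1,\dots,c_{2M})$ of elements of $A$ is planar if there is a permutation $\pi$ of $\{1,\dots,2M\}$ satisfying three conditions: - $\pi(i)<\pi(j)$ implies $c_i\le c_j$; - the family $\{\{\pi(2i-1),\pi(2i)\}:1\le i\le M\}$ is nested; - the family $\{\{\pi(2i),\pi(2i+1)\}:1\le i\le M-1\}$ is nested. An expression is planar if its Whitehead expansion is planar. $w$ is a planar word if its unique reduced expression is planar. *)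

From Stdlib Require Import Relations.
From mathcomp Require Import all_boot.
Set Implicit Arguments. Unset Strict Implicit. Unset Printing Implicit Defensive.

(* A letter of the free group on t_1..t_n: (k, false) = t_(k+1), (k, true) = t_(k+1)^-1. *)
Definition letter (n : nat) := ('I_n * bool)%type.

Definition linv n (a : letter n) : letter n := (a.1, ~~ a.2).

Definition cancel_step n (u v : seq (letter n)) : Prop :=
  exists p q (a : letter n), u = p ++ a :: linv a :: q /\ v = p ++ q.

(* Equality in the free group Sigma_{0,1,n} of the products of two expressions. *)
Definition free_eq n : relation (seq (letter n)) :=
  clos_refl_sym_trans _ (@cancel_step n).

Definition reduced n (w : seq (letter n)) : Prop :=
  forall p q (a : letter n), w <> p ++ a :: linv a :: q.

(* The alphabet A encoded in nat, preserving its order: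
   zbar_1 |-> 0, t_(k+1) |-> 2k+1, tbar_(k+1) |-> 2k+2, z_1 |-> 2n+1. *)
Definition code n (a : letter n) : nat := (2 * a.1 + 1 + a.2)%N.
Definition zbar1 : nat := 0.
Definition z1 (n : nat) : nat := (2 * n + 1)%N.

Definition whitehead n (e : seq (letter n)) : seq nat :=
  zbar1 :: flatten [seq [:: code a; code (linv a)] | a <- e] ++ [:: z1 n].

Definition between (a b x : nat) : bool := (minn a b < x) && (x < maxn a b).
Definition nested_pair (a b c d : nat) : Prop :=
  uniq [:: a; b; c; d] /\ (between a b c = between a b d).

Definition same_set (a b c d : nat) : Prop := (a = c /\ b = d) \/ (a = d /\ b = c).

(* Family {{f(2j), f(2j+1)} : j < M} (0-based) nested, and
   family {{f(2j+1), f(2j+2)} : j < M-1} nested. *)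
Definition nested_fam (pr : nat -> nat * nat) (K : nat) : Prop :=
  forall j j', j < K -> j' < K ->
    ~ same_set (pr j).1 (pr j).2 (pr j').1 (pr j').2 ->
    nested_pair (pr j).1 (pr j).2 (pr j').1 (pr j').2.

(* Planar 2M-tuple (0-based indices; permutation pi of {0..2M-1} given as
   the sequence of its values). *)
Definition planar_tuple (c : seq nat) : Prop :=
  let N := size c in let M := N %/ 2 in
  exists s : seq nat, perm_eq s (iota 0 N) /\
    let pi := fun i => nth 0 s i in
    (forall i j, i < N -> j < N -> pi i < pi j -> nth 0 c i <= nth 0 c j) /\
    nested_fam (fun j => (pi (2 * j), pi (2 * j + 1))) M /\
    nested_fam (fun j => (pi (2 * j + 1), pi (2 * j + 2))) M.-1.

Definition planar_expr n (e : seq (letter n)) : Prop := planar_tuple (whitehead e).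

(* By induction on the length of a planar expression e of w.  If e is reduced
   it is the reduced expression of w, free reduction being an invariant of
   equality in the free group ([free_eq_reduced]).  Otherwise e contains a
   cancellation a a^-1, which is a "site" t of its Whitehead expansion c:
   c(2t+2) = c(2t+3).  Given a planar witness pi, the span of a site is the
   distance between pi(2t+1) and pi(2t+4).  A descent ([adjacent_site]) finds
   a site of span at most 1: a point strictly between pi(2t+1) and pi(2t+4) is
   followed along its inner chord (its letter) and then along an outer chord,
   landing on a new site strictly inside the old one.  Deleting the four
   positions of a site of span at most 1 and renumbering pi by rank keeps all
   chords nested, the two outer chords around the site merging into one
   ([planar_remove]).  This yields a planar expression with one cancellation
   fewer ([planar_cancel]). *)

From Stdlib Require Import Relations Lia.
From mathcomp Require Import all_boot zify.
Set Implicit Arguments. Unset Strict Implicit. Unset Printing Implicit Defensive.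

Section FreeReduction.
Variable n : nat.
Implicit Types (a b : letter n) (s r p q : seq (letter n)).

Lemma linvK a : linv (linv a) = a.
Proof. by case: a => k b; rewrite /linv /= negbK. Qed.

Definition red_cons a s : seq (letter n) :=
  if s is b :: r then (if b == linv a then r else a :: s) else [:: a].

Definition nf s : seq (letter n) := foldr red_cons [::] s.

Lemma reduced_behead a s : reduced (a :: s) -> reduced s.
Proof. by move=> H p q x E; apply: (H (a :: p) q x); rewrite E. Qed.

Lemma reducedP s : reduced s \/ exists p q a, s = p ++ a :: linv a :: q.
Proof.
elim: s => [|a s [Hs | [p [q [b ->]]]]]; last by right; exists (a :: p), q, b.
  by left => [[|? ?]] ? ?.
case: s Hs => [|b s] Hs; first by left => [[|? [|? ?]]] ? ?.
have [Eb | nEb] := eqVneq b (linv a); first by right; exists [::], s, a; rewrite Eb.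
left => [[|x p]] q y /= [Ex].
  by move=> Eb _; move: nEb; rewrite Eb Ex eqxx.
by move=> Es; apply: (Hs p q y Es).
Qed.

Lemma reduced_red_cons a s : reduced s -> reduced (red_cons a s).
Proof.
case: s => [|b s] /= H; first by move=> [|y [|? ?]] ? ?.
case: eqP => [_ | nEb]; first exact: reduced_behead H.
move=> [|y p] q x /= [Ey]; first by move=> Eb _; apply: nEb; rewrite Eb Ey.
by move=> Es; apply: (H p q x Es).
Qed.

Lemma nf_reduced s : reduced (nf s).
Proof. by elim: s => [|a s IH] /=; [move=> [|? ?] ? ? | apply: reduced_red_cons]. Qed.

Lemma nf_id s : reduced s -> nf s = s.
Proof.
elim: s => [|a s IH] //= H; rewrite IH; last exact: reduced_behead H.
case: s H {IH} => [|b s] //= H; case: eqP => // Eb.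
by case: (H [::] s a); rewrite Eb.
Qed.

Lemma red_cons_cancel a s : reduced s -> red_cons a (red_cons (linv a) s) = s.
Proof.
case: s => [|b s] /= H; first by rewrite eqxx.
rewrite linvK; case: eqP => [Eb | nEb] /=; last by case: eqP.
case: s H => [|c s] /= H; first by rewrite Eb.
case: eqP => [Ec | _]; last by rewrite Eb.
by case: (H [::] s b); rewrite Ec Eb.
Qed.

Lemma free_eq_nf s r : free_eq s r -> nf s = nf r.
Proof.
elim=> // [x y [p [q [a [-> ->]]]] | x y z _ -> _ -> //].
by rewrite /nf !foldr_cat /= red_cons_cancel //; apply: nf_reduced.
Qed.

Lemma free_eq_reduced s r : free_eq s r -> reduced s -> reduced r -> s = r.
Proof. by move=> /free_eq_nf E Hs Hr; rewrite -(nf_id Hs) -(nf_id Hr). Qed.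

End FreeReduction.

Definition inb (a b x : nat) : Prop := (a < x /\ x < b) \/ (b < x /\ x < a).

Definition nested4 (a b c d : nat) : Prop :=
  (a <> b /\ a <> c /\ a <> d /\ b <> c /\ b <> d /\ c <> d) /\ (inb a b c <-> inb a b d).

Lemma betweenP a b x : between a b x <-> inb a b x.
Proof. by rewrite /between /inb; split => [/andP[]|[] [h1 h2]]; try apply/andP; lia. Qed.

Lemma uniq4P (a b c d : nat) : uniq [:: a; b; c; d] <->
  (a <> b /\ a <> c /\ a <> d /\ b <> c /\ b <> d /\ c <> d).
Proof.
have -> : uniq [:: a; b; c; d] = [&& a != b, a != c, a != d, b != c, b != d & c != d].
  by rewrite /= !inE !negb_or andbT !andbA.
split; first by move=> /and5P[/eqP ? /eqP ? /eqP ? /eqP ? /andP[/eqP ? /eqP ?]].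
by move=> [? [? [? [? [? ?]]]]]; apply/and5P; split; try apply/andP; try split; apply/eqP.
Qed.

Lemma nested_pairP a b c d : nested_pair a b c d <-> nested4 a b c d.
Proof.
have bool_iff (x y : bool) : x = y <-> (x <-> y).
  by case: x; case: y; split => // [[H1 H2]]; [have := H1 isT | have := H2 isT].
by rewrite /nested_pair /nested4 uniq4P bool_iff !betweenP.
Qed.

Lemma nested4_sym a b c d : nested4 a b c d -> nested4 c d a b.
Proof. rewrite /nested4 /inb; lia. Qed.

Lemma nested4_swap a b c d : nested4 a b c d -> nested4 b a c d.
Proof. rewrite /nested4 /inb; lia. Qed.

Lemma nested4_mono (P : nat -> Prop) (g : nat -> nat) a b c d :
  (forall x y, P x -> P y -> x < y -> g x < g y) ->
  P a -> P b -> P c -> P d -> nested4 a b c d -> nested4 (g a) (g b) (g c) (g d).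
Proof.
move=> gmono Pa Pb Pc Pd.
have gord : forall x y, P x -> P y -> x <> y -> (x < y <-> g x < g y).
  move=> x y Px Py nxy; have := gmono x y Px Py; have := gmono y x Py Px; lia.
have ginb : forall x y z, P x -> P y -> P z -> x <> y -> x <> z -> y <> z ->
    (inb x y z <-> inb (g x) (g y) (g z)).
  move=> x y z Px Py Pz nxy nxz nyz; rewrite /inb.
  have := gord x y Px Py nxy; have := gord y x Py Px (nesym nxy).
  have := gord x z Px Pz nxz; have := gord z x Pz Px (nesym nxz).
  have := gord y z Py Pz nyz; have := gord z y Pz Py (nesym nyz); lia.
have gneq : forall x y, P x -> P y -> x <> y -> g x <> g y.
  by move=> x y Px Py nxy; have := gmono x y Px Py; have := gmono y x Py Px; lia.
move=> [[nab [nac [nad [nbc [nbd ncd]]]]] Hcd].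
by split; [repeat split; apply: gneq | rewrite -!ginb].
Qed.

Definition distn (a b : nat) : nat := a - b + (b - a).

Lemma inbE a b z : z <> a -> z <> b -> inb a b z <-> ((a < z) != (b < z)).
Proof. by move=> *; rewrite /inb; case: ltngtP; case: ltngtP; lia. Qed.

Lemma inb_split x p q y z : z <> x -> z <> y -> z <> p -> z <> q ->
  distn p q <= 1 -> (inb x y z <-> ~ (inb x p z <-> inb q y z)).
Proof.
move=> zx zy zp zq; rewrite /distn !inbE // => adj.
have -> : (q < z) = (p < z) by apply/idP/idP; lia.
by case: (x < z); case: (y < z); case: (p < z) => /=; intuition.
Qed.

Lemma nested4_merge x p q y u v : nested4 x p u v -> nested4 q y u v ->
  x <> y -> x <> q -> p <> y -> p <> q -> distn p q <= 1 -> nested4 x y u v.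
Proof.
move=> [[nxp [nxu [nxv [npu [npv nuv]]]]] Hxp] [[nqy [nqu [nqv [nyu [nyv _]]]]] Hqy].
move=> nxy nxq npy npq adj; split; first by repeat split.
by rewrite !(@inb_split x p q y) 1?Hxp 1?Hqy //; apply: nesym.
Qed.

Definition separated (a1 a2 a3 b1 b2 b3 : nat) : Prop :=
  (a1 < b1 /\ a1 < b2 /\ a1 < b3 /\ a2 < b1 /\ a2 < b2 /\ a2 < b3 /\
   a3 < b1 /\ a3 < b2 /\ a3 < b3) \/
  (b1 < a1 /\ b2 < a1 /\ b3 < a1 /\ b1 < a2 /\ b2 < a2 /\ b3 < a2 /\
   b1 < a3 /\ b2 < a3 /\ b3 < a3).

Lemma chord_inside P1 P2 P3 P4 x y : inb P1 P4 x ->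
  nested4 x y P1 P2 -> nested4 x y P3 P4 -> separated P1 P4 x P2 P3 y -> inb P2 P3 y.
Proof. rewrite /nested4 /inb /separated; lia. Qed.

Lemma chord_inside_back P1 P2 P3 P4 x y : inb P2 P3 y ->
  nested4 x y P1 P2 -> nested4 x y P3 P4 -> nested4 P1 P2 P3 P4 ->
  separated P1 P4 x P2 P3 y -> inb P1 P4 x.
Proof. rewrite /nested4 /inb /separated; lia. Qed.

Lemma inb_closer P1 P4 x y : inb P1 P4 x -> inb P1 P4 y -> distn x y < distn P1 P4.
Proof. rewrite /inb /distn; lia. Qed.

Definition perm_on (N : nat) (pi : nat -> nat) : Prop :=
  (forall i, i < N -> pi i < N) /\ (forall i j, i < N -> j < N -> pi i = pi j -> i = j).

Lemma perm_on_mkseq N pi : perm_on N pi -> perm_eq (mkseq pi N) (iota 0 N).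
Proof.
move=> [range inj].
have U : uniq (mkseq pi N).
  by rewrite map_inj_in_uniq ?iota_uniq // => i j; rewrite !mem_iota; apply: inj.
have sub : {subset mkseq pi N <= iota 0 N}.
  by move=> y /mapP[i]; rewrite !mem_iota => /range ? ->.
have size_le : size (iota 0 N) <= size (mkseq pi N) by rewrite size_mkseq size_iota.
have [_ E] := uniq_min_size U sub size_le.
exact: uniq_perm U (iota_uniq _ _) E.
Qed.

Lemma perm_on_neq N pi i j : perm_on N pi -> i < N -> j < N -> i <> j -> pi i <> pi j.
Proof. by move=> [_ inj] iN jN nij /(inj _ _ iN jN). Qed.

Lemma perm_on_onto N pi x : perm_on N pi -> x < N -> exists2 i, i < N & pi i = x.
Proof.
move=> /perm_on_mkseq P xN; have : x \in mkseq pi N by rewrite (perm_mem P) mem_iota.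
by move=> /mapP[i]; rewrite mem_iota => ? ->; exists i.
Qed.

(* [rank R x] counts the numbers below x outside R; it renumbers the
   complement of R increasingly from 0. *)
Definition rank (R : seq nat) (x : nat) : nat := count (fun z => z \notin R) (iota 0 x).

Lemma rankS R x : rank R x.+1 = rank R x + (x \notin R).
Proof. by rewrite /rank -addn1 iotaD count_cat /= addn0. Qed.

Lemma rank_mono R x y : x <= y -> rank R x <= rank R y.
Proof.
move=> /subnKC <-; elim: (y - x) => [|k IH]; first by rewrite addn0.
by rewrite addnS rankS; apply: leq_trans IH (leq_addr _ _).
Qed.

Lemma rank_strict R x y : x \notin R -> x < y -> rank R x < rank R y.
Proof. by move=> xR /(rank_mono R); apply: leq_trans; rewrite rankS xR addn1. Qed.

Lemma rank_bound R N x : uniq R -> all (fun r => r < N) R -> x \notin R -> x < N ->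
  rank R x < N - size R.
Proof.
move=> U RN xR xN; apply: leq_trans (rank_strict xR xN) _.
have : size R <= count (predC (fun z => z \notin R)) (iota 0 N).
  rewrite -size_filter; apply: uniq_leq_size => // r rR.
  by rewrite mem_filter /= negbK rR mem_iota /= (allP RN).
by have := count_predC (fun z => z \notin R) (iota 0 N); rewrite size_iota /rank; lia.
Qed.

Record planar_data (col pi : nat -> nat) (M : nat) : Prop := PlanarData {
  pd_perm : perm_on (2 * M) pi;
  pd_sorted : forall i j, i < 2 * M -> j < 2 * M -> pi i < pi j -> col i <= col j;
  pd_outer : forall j j', j < M -> j' < M -> j <> j' ->
    nested4 (pi (2 * j)) (pi (2 * j + 1)) (pi (2 * j')) (pi (2 * j' + 1));
  pd_inner : forall j j', j.+1 < M -> j'.+1 < M -> j <> j' ->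
    nested4 (pi (2 * j + 1)) (pi (2 * j + 2)) (pi (2 * j' + 1)) (pi (2 * j' + 2)) }.

Lemma perm_on_chords N pi a b c d : perm_on N pi ->
  a < N -> b < N -> c < N -> d < N -> a <> c -> a <> d -> b <> c -> b <> d ->
  ~ same_set (pi a) (pi b) (pi c) (pi d).
Proof.
move=> [_ inj] aN bN cN dN nac nad nbc nbd [[Eac _] | [Ead _]].
  exact/nac/inj.
exact/nad/inj.
Qed.

Lemma planar_tupleP (c : seq nat) M : size c = 2 * M ->
  planar_tuple c <-> exists pi, planar_data (nth 0 c) pi M.
Proof.
move=> sz; rewrite /planar_tuple sz (_ : 2 * M %/ 2 = M); last by rewrite mulKn.
split=> [[s [P [sorted [outer inner]]]] | [pi [perm sorted outer inner]]].
- have U : uniq s by rewrite (perm_uniq P) iota_uniq.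
  have szs : size s = 2 * M by rewrite (perm_size P) size_iota.
  have perm : perm_on (2 * M) (nth 0 s).
    split=> [i iM | i j iM jM].
      have : nth 0 s i \in iota 0 (2 * M) by rewrite -(perm_mem P) mem_nth // szs.
      by rewrite mem_iota.
    by move/eqP; rewrite nth_uniq ?szs // => /eqP.
  exists (nth 0 s); split=> // [j j' jM j'M njj | j j' jM j'M njj].
    apply/nested_pairP/outer; try lia.
    by apply: (perm_on_chords perm); lia.
  apply/nested_pairP/inner; try lia.
  by apply: (perm_on_chords perm); lia.
- have nthE i : i < 2 * M -> nth 0 (mkseq pi (2 * M)) i = pi i.
    by move=> iM; rewrite nth_mkseq.
  exists (mkseq pi (2 * M)); split; first exact: perm_on_mkseq.
  split; first by move=> i j iM jM; rewrite !nthE //; apply: sorted.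
  split=> j j' jM j'M nss /=.
    have njj : j <> j' by move=> E; apply: nss; rewrite E; left.
    by rewrite !nthE; try lia; apply/nested_pairP/outer.
  have njj : j <> j' by move=> E; apply: nss; rewrite E; left.
  by rewrite !nthE; try lia; apply/nested_pairP/inner; lia.
Qed.

(* Deleting the four positions 2t+1, ..., 2t+4 (a cancelling pair of letters)
   from a tuple: the new position i corresponds to the old position
   [skip_site t i].  Outer chord j of the new tuple is the old outer chord
   [gap t j] (for j <> t) and inner chord j is the old inner chord [gap t j]. *)
Definition skip_site (t i : nat) : nat := if i < 2 * t + 1 then i else i + 4.
Definition gap (t j : nat) : nat := if j < t then j else j.+2.

Lemma gapP t j : (j < t /\ gap t j = j) \/ (t <= j /\ gap t j = j.+2).
Proof. by rewrite /gap; case: ltnP; [left | right]. Qed.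

Lemma skip_outer t j : j <> t ->
  skip_site t (2 * j) = 2 * gap t j /\ skip_site t (2 * j + 1) = 2 * gap t j + 1.
Proof. by rewrite /skip_site; have := gapP t j; case: ifP; case: ifP; lia. Qed.

Lemma skip_inner t j :
  skip_site t (2 * j + 1) = 2 * gap t j + 1 /\ skip_site t (2 * j + 2) = 2 * gap t j + 2.
Proof. by rewrite /skip_site; have := gapP t j; case: ifP; case: ifP; lia. Qed.

Lemma skip_merged t : skip_site t (2 * t) = 2 * t /\ skip_site t (2 * t + 1) = 2 * t + 5.
Proof. by rewrite /skip_site; case: ifP; case: ifP; lia. Qed.

Section RemoveAdjacentSite.

Variables (col col' pi : nat -> nat) (K t : nat).
Hypothesis pd : planar_data col pi (K + 2).
Hypothesis tK : t < K.
(* The two outer ends of the cancelling pair are adjacent under pi. *)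
Hypothesis adj : distn (pi (2 * t + 1)) (pi (2 * t + 4)) <= 1.
Hypothesis col'E : forall i, col' i = col (skip_site t i).

Let removed := [:: pi (2 * t + 1); pi (2 * t + 2); pi (2 * t + 3); pi (2 * t + 4)].

Definition pi_removed (i : nat) : nat := rank removed (pi (skip_site t i)).

Lemma skip_bounds i : i < 2 * K ->
  skip_site t i < 2 * (K + 2) /\ (skip_site t i < 2 * t + 1 \/ 2 * t + 4 < skip_site t i).
Proof. by rewrite /skip_site; case: ifP; lia. Qed.

Lemma kept_notin i : i < 2 * (K + 2) -> i < 2 * t + 1 \/ 2 * t + 4 < i -> pi i \notin removed.
Proof.
have [_ inj] := pd_perm pd; move=> iN ir; rewrite !inE.
by apply/negP; case/or4P => /eqP E; move: ir; rewrite (inj _ _ iN _ E); lia.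
Qed.

Lemma pi_removed_order i j :
  pi_removed i < pi_removed j -> pi (skip_site t i) < pi (skip_site t j).
Proof. by rewrite !ltnNge; apply: contra => /(rank_mono removed). Qed.

Lemma pi_removed_perm : perm_on (2 * K) pi_removed.
Proof.
have [range inj] := pd_perm pd.
have removed_uniq : uniq removed.
  by apply/uniq4P; repeat split; apply: (perm_on_neq (pd_perm pd)); lia.
have removed_bound : all (fun r => r < 2 * (K + 2)) removed by rewrite /= !range; lia.
split=> [i iK | i j iK jK E].
  have [sN sr] := skip_bounds iK.
  have := rank_bound removed_uniq removed_bound (kept_notin sN sr) (range _ sN).
  by rewrite /pi_removed /=; lia.
have [siN sir] := skip_bounds iK; have [sjN sjr] := skip_bounds jK.
have E' : pi (skip_site t i) = pi (skip_site t j).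
  move: E; rewrite /pi_removed; case: (ltngtP (pi (skip_site t i)) (pi (skip_site t j))) => // lt_ij.
    by have := rank_strict (kept_notin siN sir) lt_ij; lia.
  by have := rank_strict (kept_notin sjN sjr) lt_ij; lia.
by have := inj _ _ siN sjN E'; rewrite /skip_site; case: ifP; case: ifP; lia.
Qed.

Lemma nested_removed a b c d : a < 2 * K -> b < 2 * K -> c < 2 * K -> d < 2 * K ->
  nested4 (pi (skip_site t a)) (pi (skip_site t b)) (pi (skip_site t c)) (pi (skip_site t d)) ->
  nested4 (pi_removed a) (pi_removed b) (pi_removed c) (pi_removed d).
Proof.
have keep x : x < 2 * K -> pi (skip_site t x) \notin removed.
  by move=> /skip_bounds[]; apply: kept_notin.
move=> aK bK cK dK; apply: (nested4_mono (P := fun x => x \notin removed)); try exact: keep.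
by move=> x y xr _; apply: rank_strict.
Qed.

(* The old outer chords t and t+2 merge into the new outer chord t; it is
   nested with every other old outer chord k, because pi (2t+1) and pi (2t+4)
   are adjacent. *)
Lemma merged_nested k : k < K + 2 -> k <> t -> k <> t.+1 -> k <> t.+2 ->
  nested4 (pi (2 * t)) (pi (2 * t + 5)) (pi (2 * k)) (pi (2 * k + 1)).
Proof.
move=> kK kt kt1 kt2; have neq := perm_on_neq (pd_perm pd).
apply: (@nested4_merge _ (pi (2 * t + 1)) (pi (2 * t + 4))) => //; try (apply: neq; lia).
  by apply: (pd_outer pd); lia.
have -> : 2 * t + 4 = 2 * t.+2 by lia.
have -> : 2 * t + 5 = 2 * t.+2 + 1 by lia.
by apply: (pd_outer pd); lia.
Qed.

Lemma planar_remove : planar_data col' pi_removed K.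
Proof.
have gap_bound j : j < K -> gap t j < K + 2 by have := gapP t j; lia.
split.
- exact: pi_removed_perm.
- move=> i j iK jK /pi_removed_order lt_ij; rewrite !col'E.
  have [? _] := skip_bounds iK; have [? _] := skip_bounds jK.
  exact: (pd_sorted pd).
- have merged j : j < K -> j <> t -> nested4 (pi_removed (2 * t)) (pi_removed (2 * t + 1))
      (pi_removed (2 * j)) (pi_removed (2 * j + 1)).
    move=> jK jt; apply: nested_removed; try lia.
    have [-> ->] := skip_merged t; have [-> ->] := skip_outer jt.
    by apply: merged_nested; have := gapP t j; lia.
  move=> j j' jK j'K njj; case: (eqVneq j t) => [Ejt | /eqP jt].
    by subst j; apply: merged => //; apply: nesym.
  case: (eqVneq j' t) => [Ej't | /eqP j't]; first by subst j'; apply/nested4_sym/merged.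
  apply: nested_removed; try lia.
  have [-> ->] := skip_outer jt; have [-> ->] := skip_outer j't.
  by apply: (pd_outer pd); have := gapP t j; have := gapP t j'; lia.
- move=> j j' jK j'K njj; apply: nested_removed; try lia.
  have [-> ->] := skip_inner t j; have [-> ->] := skip_inner t j'.
  by apply: (pd_inner pd); have := gapP t j; have := gapP t j'; lia.
Qed.

End RemoveAdjacentSite.

Lemma parity_split i : 0 < i -> exists j, i = 2 * j + 1 \/ i = 2 * j + 2.
Proof.
move=> i0; exists (i.-1./2); have := odd_double_half i.-1.
by case: (odd i.-1) => /=; lia.
Qed.

Section Descent.

(* A Whitehead-like colouring of positions 0, ..., 2m+1: the end colours
   occur only at the ends, and positions 2j+1, 2j+2 (the j-th letter and its
   inverse) carry distinct colours, each the [partner] of the other. *)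
Variables (col partner pi : nat -> nat) (m : nat).
Hypothesis pd : planar_data col pi (m + 1).
Hypothesis col_ends : forall i, 0 < i -> i < 2 * m + 1 ->
  col i <> col 0 /\ col i <> col (2 * m + 1).
Hypothesis col_letters : forall j, j < m ->
  [/\ col (2 * j + 2) = partner (col (2 * j + 1)),
      col (2 * j + 1) = partner (col (2 * j + 2)) & col (2 * j + 1) <> col (2 * j + 2)].

(* A cancellation site: letter t+1 is the inverse of letter t. *)
Definition site (t : nat) : Prop := t.+1 < m /\ col (2 * t + 3) = col (2 * t + 2).

Definition span (t : nat) : nat := distn (pi (2 * t + 1)) (pi (2 * t + 4)).

Lemma col_order i j : i < 2 * m + 2 -> j < 2 * m + 2 -> col i < col j -> pi i < pi j.
Proof.
have [_ inj] := pd_perm pd; move=> iN jN lt_col.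
case: (ltngtP (pi i) (pi j)) => // [lt_pi | E].
  by have := pd_sorted pd (i := j) (j := i) ltac:(lia) ltac:(lia) lt_pi; lia.
by move: lt_col; rewrite (inj i j) //; lia.
Qed.

Lemma col_sandwich i j k : i < 2 * m + 2 -> j < 2 * m + 2 -> k < 2 * m + 2 ->
  col i = col k -> inb (pi i) (pi k) (pi j) -> col j = col i.
Proof.
move=> iN jN kN Eik; rewrite /inb.
have := col_order iN jN; have := col_order jN iN.
have := col_order kN jN; have := col_order jN kN; lia.
Qed.

Lemma site_colors t : site t ->
  col (2 * t + 4) = col (2 * t + 1) /\ col (2 * t + 1) <> col (2 * t + 2).
Proof.
move=> [tm Ect]; have [E1 E2 neq] := col_letters (j := t) ltac:(lia).
have [E3 _ _] := col_letters (j := t.+1) tm.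
have -> : 2 * t + 4 = 2 * t.+1 + 2 by lia.
by rewrite E3 (_ : 2 * t.+1 + 1 = 2 * t + 3) ?Ect -?E2; last lia.
Qed.

Lemma separated_colors a1 a2 a3 b1 b2 b3 :
  a1 < 2 * m + 2 -> a2 < 2 * m + 2 -> a3 < 2 * m + 2 ->
  b1 < 2 * m + 2 -> b2 < 2 * m + 2 -> b3 < 2 * m + 2 ->
  col a2 = col a1 -> col a3 = col a1 -> col b2 = col b1 -> col b3 = col b1 ->
  col a1 <> col b1 -> separated (pi a1) (pi a2) (pi a3) (pi b1) (pi b2) (pi b3).
Proof.
move=> ? ? ? ? ? ? E2 E3 F2 F3 neq.
case: (ltngtP (col a1) (col b1)) => [lt | lt | //]; [left | right];
  by repeat split; apply: col_order => //; rewrite ?E2 ?E3 ?F2 ?F3.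
Qed.

Lemma inner_chord i : 0 < i -> i < 2 * m + 1 -> exists j i',
  [/\ j < m, (i = 2 * j + 1 /\ i' = 2 * j + 2) \/ (i = 2 * j + 2 /\ i' = 2 * j + 1),
      col i' = partner (col i) &
      forall k, k < m -> k <> j -> nested4 (pi i) (pi i') (pi (2 * k + 1)) (pi (2 * k + 2))].
Proof.
move=> i0 im; have [j Ei] := parity_split i0.
have jm : j < m by lia.
have [E1 E2 _] := col_letters jm.
have nest k : k < m -> k <> j ->
    nested4 (pi (2 * j + 1)) (pi (2 * j + 2)) (pi (2 * k + 1)) (pi (2 * k + 2)).
  by move=> km kj; apply: (pd_inner pd); lia.
case: Ei => ->.
  by exists j, (2 * j + 2); split; auto.
exists j, (2 * j + 1); split; auto => k km kj.
exact/nested4_swap/nest.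
Qed.

Lemma outer_chord i : i < 2 * m + 2 -> exists k i',
  [/\ k < m + 1, (i = 2 * k /\ i' = 2 * k + 1) \/ (i = 2 * k + 1 /\ i' = 2 * k) &
      forall k', k' < m + 1 -> k' <> k -> nested4 (pi i) (pi i') (pi (2 * k')) (pi (2 * k' + 1))].
Proof.
move=> iN; have nest k k' : k < m + 1 -> k' < m + 1 -> k' <> k ->
    nested4 (pi (2 * k)) (pi (2 * k + 1)) (pi (2 * k')) (pi (2 * k' + 1)).
  by move=> km k'm k'k; apply: (pd_outer pd); lia.
have [k Ei] : exists k, i = 2 * k \/ i = 2 * k + 1.
  by exists i./2; have := odd_double_half i; case: (odd i) => /=; lia.
have km : k < m + 1 by lia.
case: Ei => ->; [exists k, (2 * k + 1) | exists k, (2 * k)]; split; auto.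
by move=> k' k'm k'k; apply/nested4_swap/nest.
Qed.

Lemma partner_inside t i : site t -> i < 2 * m + 2 ->
  inb (pi (2 * t + 1)) (pi (2 * t + 4)) (pi i) ->
  exists i', [/\ i' < 2 * m + 2, col i' = col (2 * t + 2) &
                 inb (pi (2 * t + 2)) (pi (2 * t + 3)) (pi i')].
Proof.
move=> st iN inside; have [c4 neq] := site_colors st; have [tm c3] := st.
have ci : col i = col (2 * t + 1).
  by apply: (col_sandwich (k := 2 * t + 4)) => //; try lia; rewrite c4.
have [end0 endN] := col_ends (i := 2 * t + 1) ltac:(lia) ltac:(lia).
have i0 : 0 < i by case: (posnP i) => // Ei; case: end0; rewrite -ci Ei.
have iN' : i < 2 * m + 1.
  by case: (ltngtP i (2 * m + 1)) => // Ei; [lia | case: endN; rewrite -ci Ei].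
have [j [i' [jm Eii' ci' nest]]] := inner_chord i0 iN'.
have [Et _ _] := col_letters (j := t) ltac:(lia).
have jt : j <> t.
  move=> Ej; case: Eii' => [[Ei _] | [Ei _]]; first by move: inside; rewrite Ei Ej /inb; lia.
  by apply: neq; rewrite -ci Ei Ej.
have jt1 : j <> t.+1.
  move=> Ej; case: Eii' => [[Ei _] | [Ei _]].
    by apply: neq; rewrite -ci -c3 Ei Ej; congr col; lia.
  by move: inside; rewrite (_ : i = 2 * t + 4) /inb; lia.
exists i'; split; [lia | by rewrite ci' ci -Et |].
apply: (@chord_inside (pi (2 * t + 1)) _ _ (pi (2 * t + 4)) (pi i)) => //.
- by apply: nest; lia.
- have E3 : 2 * t + 3 = 2 * t.+1 + 1 by lia.
  have E4 : 2 * t + 4 = 2 * t.+1 + 2 by lia.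
  by rewrite E3 E4; apply: nest => //; apply: nesym.
- apply: separated_colors; try lia; rewrite ?ci ?c3 //.
  by rewrite ci' ci -Et.
Qed.

Lemma outer_inside t i : site t -> i < 2 * m + 2 ->
  inb (pi (2 * t + 2)) (pi (2 * t + 3)) (pi i) -> exists k,
  [/\ 0 < k, k < m, inb (pi (2 * t + 2)) (pi (2 * t + 3)) (pi (2 * k)) &
                    inb (pi (2 * t + 2)) (pi (2 * t + 3)) (pi (2 * k + 1))].
Proof.
move=> [tm c3] iN inside.
have [k [i' [km Eii' nest]]] := outer_chord iN.
have kt1 : k <> t.+1.
  move=> Ek; move: inside; rewrite /inb.
  by case: Eii' => [[Ei _] | [Ei _]]; [rewrite (_ : i = 2 * t + 2) | rewrite (_ : i = 2 * t + 3)]; lia.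
have [_ [inside' _]] : nested4 (pi (2 * t + 2)) (pi (2 * t + 3)) (pi i) (pi i').
  have E2 : 2 * t + 2 = 2 * t.+1 by lia.
  have E3 : 2 * t + 3 = 2 * t.+1 + 1 by lia.
  by rewrite E2 E3; apply/nested4_sym/nest => //; [lia | apply: nesym].
have {}inside' := inside' inside.
have in2k : inb (pi (2 * t + 2)) (pi (2 * t + 3)) (pi (2 * k)) /\
            inb (pi (2 * t + 2)) (pi (2 * t + 3)) (pi (2 * k + 1)).
  by case: Eii' => [[<- <-] | [<- <-]].
have col_in j : j < 2 * m + 2 -> inb (pi (2 * t + 2)) (pi (2 * t + 3)) (pi j) -> col j = col (2 * t + 2).
  by move=> jN; apply: col_sandwich => //; lia.
have [end0 endN] := col_ends (i := 2 * t + 2) ltac:(lia) ltac:(lia).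
case: in2k => in0 in1; exists k; split => //.
  have [Ek | //] := posnP k.
  by move: in0; rewrite Ek muln0 => /(col_in 0 ltac:(lia)) E; case: end0; rewrite E.
case: (ltngtP k m) => // Ek; first lia.
by move: in1; rewrite Ek => /(col_in (2 * m + 1) ltac:(lia)) E; case: endN; rewrite E.
Qed.

Lemma inner_nested_site j t : site t -> j < m -> j <> t -> j <> t.+1 ->
  nested4 (pi (2 * j + 1)) (pi (2 * j + 2)) (pi (2 * t + 1)) (pi (2 * t + 2)) /\
  nested4 (pi (2 * j + 1)) (pi (2 * j + 2)) (pi (2 * t + 3)) (pi (2 * t + 4)).
Proof.
move=> [tm _] jm jt jt1; split; first by apply: (pd_inner pd); lia.
have E3 : 2 * t + 3 = 2 * t.+1 + 1 by lia.
have E4 : 2 * t + 4 = 2 * t.+1 + 2 by lia.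
by rewrite E3 E4; apply: (pd_inner pd); lia.
Qed.

Lemma inside_site t k : site t -> 0 < k -> k < m ->
  inb (pi (2 * t + 2)) (pi (2 * t + 3)) (pi (2 * k)) ->
  inb (pi (2 * t + 2)) (pi (2 * t + 3)) (pi (2 * k + 1)) ->
  site k.-1 /\ span k.-1 < span t.
Proof.
move=> st; have [c4 neq] := site_colors st; have [tm c3] := st.
case: k => // t' _ km /=.
have -> : 2 * t'.+1 = 2 * t' + 2 by lia.
have -> : 2 * t' + 2 + 1 = 2 * t' + 3 by lia.
move=> in2 in3.
have col_in j : j < 2 * m + 2 -> inb (pi (2 * t + 2)) (pi (2 * t + 3)) (pi j) -> col j = col (2 * t + 2).
  by move=> jN; apply: col_sandwich => //; lia.
have c2' := col_in (2 * t' + 2) ltac:(lia) in2.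
have c3' := col_in (2 * t' + 3) ltac:(lia) in3.
have st' : site t' by split; [lia | rewrite c2' c3'].
have [c4' neq'] := site_colors st'.
have [_ Et _] := col_letters (j := t) ltac:(lia).
have [_ Et' _] := col_letters (j := t') ltac:(lia).
have c1' : col (2 * t' + 1) = col (2 * t + 1) by rewrite Et' Et c2'.
have t't : t' <> t by move=> E; move: in2; rewrite E /inb; lia.
have t't1 : t' <> t.+1.
  by move=> E; apply: neq; rewrite -c4 -c2' E; congr col; lia.
have t'1t : t'.+1 <> t.
  by move=> E; apply: neq; rewrite -c3' -E; congr col; lia.
have [N1 N2] := inner_nested_site st (j := t') ltac:(lia) t't t't1.
have [N3 N4] := inner_nested_site st (j := t'.+1) km t'1t ltac:(lia).
move: N3 N4; have -> : 2 * t'.+1 + 1 = 2 * t' + 3 by lia.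
have -> : 2 * t'.+1 + 2 = 2 * t' + 4 by lia.
move=> /nested4_swap N3 /nested4_swap N4.
have Nt : nested4 (pi (2 * t + 1)) (pi (2 * t + 2)) (pi (2 * t + 3)) (pi (2 * t + 4)).
  have E3 : 2 * t + 3 = 2 * t.+1 + 1 by lia.
  have E4 : 2 * t + 4 = 2 * t.+1 + 2 by lia.
  by rewrite E3 E4; apply: (pd_inner pd); lia.
split=> //; apply: inb_closer.
- apply: (chord_inside_back in2 N1 N2 Nt).
  by apply: separated_colors; try lia; rewrite ?c4 ?c1' ?c3 ?c2'.
- apply: (chord_inside_back in3 N3 N4 Nt).
  by apply: separated_colors; try lia; rewrite ?c4 ?c4' ?c1' ?c3 ?c2' ?c3'.
Qed.

(* A site of span at least 2 yields a site of strictly smaller span: follow a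
   point between its outer ends to its partner, then along an outer chord. *)
Lemma descent_step t : site t -> 1 < span t -> exists t', site t' /\ span t' < span t.
Proof.
move=> st span2; have [range _] := pd_perm pd; have [tm _] := st.
have [x inside] : exists x, inb (pi (2 * t + 1)) (pi (2 * t + 4)) x.
  by exists (minn (pi (2 * t + 1)) (pi (2 * t + 4))).+1; move: span2; rewrite /span /distn /inb; lia.
have xN : x < 2 * (m + 1).
  have := range (2 * t + 1) ltac:(lia); have := range (2 * t + 4) ltac:(lia).
  by move: inside; rewrite /inb; lia.
have [i iN Ei] := perm_on_onto (pd_perm pd) xN; rewrite -Ei in inside.
have [i' [i'N _ inside']] := partner_inside (i := i) st ltac:(lia) inside.
have [k [k0 km in0 in1]] := outer_inside st i'N inside'.
by exists k.-1; apply: inside_site.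
Qed.

Lemma adjacent_site t : site t -> exists t', site t' /\ span t' <= 1.
Proof.
move: {2}(span t) (leqnn (span t)) => d; elim: d t => [|d IH] t le_span st.
  by exists t; split; [|lia].
have [le1 | gt1] := leqP (span t) 1; first by exists t.
have [t' [st' lt_span]] := descent_step st gt1.
by apply: (IH t') => //; lia.
Qed.

End Descent.

Section Whitehead.
Variable n : nat.
Implicit Types (a b : letter n) (e p q r : seq (letter n)).

(* The code of the inverse letter: t_k <-> tbar_k swaps 2k-1 and 2k. *)
Definition code_partner (k : nat) : nat := if odd k then k.+1 else k.-1.

Lemma code_facts a :
  [/\ code (linv a) = code_partner (code a), code a = code_partner (code (linv a)),
      code a <> code (linv a), 0 < code a & code a < z1 n].
Proof.
case: a => k b; rewrite /code /linv /code_partner /z1 /=.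
have := ltn_ord k; case: b => /=; rewrite addn0 !oddD; case: (odd k) => /=; split; lia.
Qed.

Lemma code_inj a b : code a = code b -> a = b.
Proof.
case: a b => [k1 b1] [k2 b2]; rewrite /code /= => E.
have Eb : b1 = b2 by move: E; case: b1; case: b2 => //=; lia.
by subst b2; congr pair; apply: ord_inj; lia.
Qed.

Definition letter_codes e : seq nat := flatten [seq [:: code a; code (linv a)] | a <- e].

Lemma letter_codes_cat p q : letter_codes (p ++ q) = letter_codes p ++ letter_codes q.
Proof. by rewrite /letter_codes map_cat flatten_cat. Qed.

Lemma size_letter_codes e : size (letter_codes e) = 2 * size e.
Proof. by elim: e => [|a e IH] //=; rewrite IH; lia. Qed.

Lemma whiteheadE e : whitehead e = zbar1 :: letter_codes e ++ [:: z1 n].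
Proof. by []. Qed.

Lemma size_whitehead e : size (whitehead e) = 2 * (size e + 1).
Proof. by rewrite whiteheadE /= size_cat size_letter_codes /=; lia. Qed.

Lemma whitehead_letter p a r :
  nth 0 (whitehead (p ++ a :: r)) (2 * size p + 1) = code a /\
  nth 0 (whitehead (p ++ a :: r)) (2 * size p + 2) = code (linv a).
Proof.
rewrite whiteheadE letter_codes_cat -catA /= !addn1 (_ : 2 * size p + 2 = (2 * size p).+2); last lia.
by rewrite /= !nth_cat size_letter_codes ltnn subnn /= ltnNge leqnSn /= subSnn.
Qed.

Lemma whitehead_letter_at e j : j < size e -> exists a,
  nth 0 (whitehead e) (2 * j + 1) = code a /\ nth 0 (whitehead e) (2 * j + 2) = code (linv a).
Proof.
move=> je; case E: (drop j e) => [|a r].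
  by move: (congr1 size E); rewrite size_drop /=; lia.
exists a; have sz : size (take j e) = j by rewrite size_take je.
have -> : e = take j e ++ a :: r by rewrite -E cat_take_drop.
by have := whitehead_letter (take j e) a r; rewrite sz.
Qed.

Lemma whitehead_ends e i : 0 < i -> i < 2 * size e + 1 ->
  nth 0 (whitehead e) i <> nth 0 (whitehead e) 0 /\
  nth 0 (whitehead e) i <> nth 0 (whitehead e) (2 * size e + 1).
Proof.
move=> i0 ie; rewrite [X in _ <> X /\ _]/= (_ : nth 0 (whitehead e) (2 * size e + 1) = z1 n); last first.
  by rewrite whiteheadE addn1 /= nth_cat size_letter_codes ltnn subnn.
have [j Ei] := parity_split i0; have [a [Ea Ea']] := whitehead_letter_at (e := e) (j := j) ltac:(lia).
have [_ _ _ pos1 lt1] := code_facts a; have [_ _ _ pos2 lt2] := code_facts (linv a).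
by case: Ei => ->; rewrite ?Ea ?Ea' /zbar1; lia.
Qed.

Lemma whitehead_letters e j : j < size e ->
  let col := nth 0 (whitehead e) in
  [/\ col (2 * j + 2) = code_partner (col (2 * j + 1)),
      col (2 * j + 1) = code_partner (col (2 * j + 2)) & col (2 * j + 1) <> col (2 * j + 2)].
Proof.
move=> je /=; have [a [-> ->]] := whitehead_letter_at je.
by have [? ? ? _ _] := code_facts a.
Qed.

Lemma cancel_site p a q : let e := p ++ a :: linv a :: q in
  (size p).+1 < size e /\
  nth 0 (whitehead e) (2 * size p + 3) = nth 0 (whitehead e) (2 * size p + 2).
Proof.
rewrite /= size_cat /=; split; first lia.
have [_ ->] := whitehead_letter p a (linv a :: q).
have := whitehead_letter (p ++ [:: a]) (linv a) q; rewrite -catA /= size_cat /= => [[<- _]].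
by congr nth; lia.
Qed.

Lemma site_cancel e t : t.+1 < size e ->
  nth 0 (whitehead e) (2 * t + 3) = nth 0 (whitehead e) (2 * t + 2) ->
  exists p a r, e = p ++ a :: linv a :: r /\ size p = t.
Proof.
move=> te Ecol; case E: (drop t e) => [|a [|b r]]; try by move: (congr1 size E); rewrite size_drop /=; lia.
have Ee : e = take t e ++ a :: b :: r by rewrite -E cat_take_drop.
have szp : size (take t e) = t by rewrite size_take; case: ltnP => //; lia.
exists (take t e), a, r; split => //; rewrite {1}Ee; suff -> : b = linv a by []; apply: code_inj.
have [_ E2] := whitehead_letter (take t e) a (b :: r).
have := whitehead_letter (take t e ++ [:: a]) b r; rewrite -catA /= size_cat /= => [[E3 _]].
rewrite -E2 -E3 -Ee szp -Ecol; congr nth; lia.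
Qed.

Lemma whitehead_skip p a b r i :
  nth 0 (whitehead (p ++ r)) i = nth 0 (whitehead (p ++ a :: b :: r)) (skip_site (size p) i).
Proof.
have split_at q : whitehead (p ++ q) = (zbar1 :: letter_codes p) ++ (letter_codes q ++ [:: z1 n]).
  by rewrite whiteheadE letter_codes_cat -!catA.
have szp : size (zbar1 :: letter_codes p) = 2 * size p + 1 by rewrite /= size_letter_codes; lia.
rewrite !split_at /skip_site [LHS]nth_cat [RHS]nth_cat szp.
case: ltnP => le_i; first by rewrite ifT.
rewrite ifF; last lia.
by rewrite (_ : i + 4 - (2 * size p + 1) = (i - (2 * size p + 1)).+4) //; lia.
Qed.

End Whitehead.

Lemma planar_cancel n (e : seq (letter n)) :
  (exists p q a, e = p ++ a :: linv a :: q) -> planar_expr e ->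
  exists e', cancel_step e e' /\ planar_expr e' /\ size e' < size e.
Proof.
move=> [p [q [a Ee]]] /(planar_tupleP (size_whitehead e)) [pi pd].
set col := nth 0 (whitehead e) in pd.
have st : site col (size e) (size p) by have := cancel_site p a q; rewrite -Ee.
have ends i : 0 < i -> i < 2 * size e + 1 -> col i <> col 0 /\ col i <> col (2 * size e + 1).
  exact: whitehead_ends.
have [t [st' adj]] := adjacent_site pd ends (@whitehead_letters n e) st.
have [p' [a' [r' [Ee' szp']]]] := site_cancel st'.1 st'.2.
exists (p' ++ r'); split; first by exists p', r', a'.
have sz : size e = size (p' ++ r') + 2 by rewrite Ee' !size_cat /=; lia.
split; last lia.
apply/(planar_tupleP (size_whitehead _)); exists (pi_removed pi t).
move: pd; rewrite sz (_ : size (p' ++ r') + 2 + 1 = size (p' ++ r') + 1 + 2); last lia.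
move=> pd; apply: (planar_remove pd); first by move: st'; rewrite /site sz; lia.
  exact: adj.
by move=> i; rewrite /col Ee' -szp'; apply: whitehead_skip.
Qed.

Theorem propositionA (n : nat) (w : seq (letter n)) :
  reduced w ->
  (exists e : seq (letter n), free_eq e w /\ planar_expr e) ->
  planar_expr w.
Proof.
move=> Hw [e [He Pe]]; move: {2}(size e) (leqnn (size e)) => k.
elim: k e He Pe => [|k IH] e He Pe le_e.
  case: (reducedP e) => [Hr | [p [q [a Ee]]]]; first by rewrite -(free_eq_reduced He Hr Hw).
  by move: le_e; rewrite Ee size_cat /= addnS.
case: (reducedP e) => [Hr | cancel]; first by rewrite -(free_eq_reduced He Hr Hw).
have [e' [step [Pe' lt_e]]] := planar_cancel cancel Pe.
apply: (IH e') => //; last lia.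
by apply: rst_trans He; apply: rst_sym; apply: rst_step.
Qed.
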